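(* Let $\Pi_0$ be a group and $\Pi_1$, $M$ abelian $\Pi_0$-modules. Let $E$ be the crossed module with group part $\Pi_0$, module part $\Pi_1$ (with its given $\Pi_0$-action) and trivial structure morphism $\Pi_1\to\Pi_0$. Then $H^2(E,M)\cong\operatorname{Hom}_{\Pi_0}(\Pi_1,M)\oplus H^2(\Pi_0,M)$.
   Context: For a crossed module $V=(G_V,M_V,\mu)$ (left action ${}^gm$, $\mu({}^gm)=g\mu(m)g^{-1}$, ${}^{\mu(n)}m=nmn^{-1}$) with $\pi_0(V)=G_V/\mu(M_V)$ and an abelian $\pi_0(V)$-module $M$, $H^2(V,M)$ is the second cohomology of the complex $C^1(V,M)=\mathrm{Map}(G_V,M)\to C^2(V,M)=\mathrm{Map}(M_V\times G_V\times G_V,M)\to C^3(V,M)=\mathrm{Map}(M_V\times M_V\times G_V\times M_V\times G_V\times G_V,M)$ with $(dc)(m,h,g)=c(\mu(m)h)-c(hg)+\bar hc(g)$, $(dc)(p,n,k,m,h,g)=c(p,\mu(n)k,\mu(m)h)-c(pn,k,hg)+c(n\,{}^km,kh,g)-\bar kc(m,h,g)$, where $\bar g$ is the class of $g$ in $\pi_0(V)$. $H^2(\Pi_0,M)$ is ordinary group cohomology. *)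

From HB Require Import structures.
From mathcomp Require Import all_boot all_algebra.
Set Implicit Arguments. Unset Strict Implicit. Unset Printing Implicit Defensive.
Import GRing.Theory.
Local Open Scope ring_scope.

Record group_axioms (G : Type) (mul : G -> G -> G) (one : G) (inv : G -> G)
  : Prop := GroupAxioms {
  grp_mulA : forall x y z, mul x (mul y z) = mul (mul x y) z;
  grp_mul1g : forall x, mul one x = x;
  grp_mulVg : forall x, mul (inv x) x = one }.

Record module_axioms (G : Type) (mul : G -> G -> G) (one : G)
  (A : zmodType) (act : G -> A -> A) : Prop := ModuleAxioms {
  mod_act1 : forall a, act one a = a;
  mod_actM : forall g h a, act (mul g h) a = act g (act h a);
  mod_actD : forall g a b, act g (a + b) = act g a + act g b }.

Definition is_equiv_hom (G : Type) (P A : zmodType)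
  (actP : G -> P -> P) (actA : G -> A -> A) (phi : P -> A) : Prop :=
  (forall x y, phi (x + y) = phi x + phi y) /\
  (forall g x, phi (actP g x) = actA g (phi x)).

Definition grp_Z2 (G : Type) (mul : G -> G -> G) (A : zmodType)
  (actA : G -> A -> A) (c : G -> G -> A) : Prop :=
  forall g h k, actA g (c h k) - c (mul g h) k + c g (mul h k) - c g h = 0.

Definition grp_B2 (G : Type) (mul : G -> G -> G) (A : zmodType)
  (actA : G -> A -> A) (c : G -> G -> A) : Prop :=
  exists f : G -> A, forall g h, c g h = actA g (f h) - f (mul g h) + f g.

(* ---------- Cochain complex of a crossed module V = (G_V, M_V, mu) ----------
   mulG : product of G_V, mulM : product of M_V, actV : action of G_V on M_V,
   mu : M_V -> G_V, actA : action of G_V on the coefficient module A through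
   pi_0(V) (i.e.  bar g . a  is written  actA g a). *)
Section CrossedCochains.
Variables (GV MV : Type) (mulG : GV -> GV -> GV) (mulM : MV -> MV -> MV)
  (actV : GV -> MV -> MV) (mu : MV -> GV) (A : zmodType) (actA : GV -> A -> A).

Definition xd1 (c : GV -> A) : MV -> GV -> GV -> A :=
  fun m h g => c (mulG (mu m) h) - c (mulG h g) + actA h (c g).

Definition xd2 (c : MV -> GV -> GV -> A) :
  MV -> MV -> GV -> MV -> GV -> GV -> A :=
  fun p n k m h g =>
    c p (mulG (mu n) k) (mulG (mu m) h) - c (mulM p n) k (mulG h g)
    + c (mulM n (actV k m)) (mulG k h) g - actA k (c m h g).

Definition xZ2 (c : MV -> GV -> GV -> A) : Prop :=
  forall p n k m h g, xd2 c p n k m h g = 0.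

Definition xB2 (c : MV -> GV -> GV -> A) : Prop :=
  exists f : GV -> A, forall m h g, c m h g = xd1 f m h g.
End CrossedCochains.

From HB Require Import structures.
From mathcomp Require Import all_boot all_algebra.
Import GRing.Theory.
Set Implicit Arguments.
Unset Strict Implicit.
Local Open Scope ring_scope.

(* For the crossed module E = (Pi0, Pi1, trivial mu) the 2-cocycle identity,
   read at m = n = p = 0, says that c := z 0 is a 2-cocycle of Pi0; read at
   other special values it says that z m h g - c h g does not depend on h, g,
   so z = c + phi for a map phi : Pi1 -> M, and the full identity then reduces
   to phi (n + k.m) = phi n + k.phi m, i.e. phi is Pi0-equivariant and additive.
   A coboundary xd1 f does not depend on its Pi1-argument and restricts on
   Pi0 x Pi0 to the group coboundary of f, so z is a coboundary of E exactly
   when phi = 0 and c is a coboundary of Pi0. *)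

Lemma addrB4ACA (A : zmodType) (a b c d x y u v : A) :
  (a + x) - (b + y) + (c + u) - (d + v) = (a - b + c - d) + (x - y + u - v).
Proof.
by rewrite !opprD (addrACA a x) (addrACA (a - b) (x - y)) (addrACA (a - b + c)).
Qed.

Lemma addrBKA (A : zmodType) (a b y w : A) : (a + y - w) - (b + y - w) = a - b.
Proof. by rewrite -(addrA a) -(addrA b) (addrC b) addrKA. Qed.

Lemma addKrBA (A : zmodType) (a b x w : A) : (x + a - w) - (x + b - w) = a - b.
Proof. by rewrite (addrC x a) (addrC x b) addrBKA. Qed.

Lemma opprB4 (A : zmodType) (a b c d : A) :
  a - b + c - d = - (d - c + b - a).
Proof.
rewrite opprB !opprD opprK -!addrA; congr (_ + _).
by rewrite addrCA [RHS]addrCA (addrC (- b)).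
Qed.

Lemma addrB4C (A : zmodType) (a b c d : A) : a - b + c - d = a + c - d - b.
Proof. by rewrite (addrAC a) (addrAC (a + c)). Qed.

Lemma addrBDC (A : zmodType) (a b c : A) : c - b + a = a - b + c.
Proof. by rewrite addrAC (addrC c) addrAC. Qed.

Lemma additive0 (P A : zmodType) (phi : P -> A) :
  (forall x y, phi (x + y) = phi x + phi y) -> phi 0 = 0.
Proof. by move=> phiD; apply: (addrI (phi 0)); rewrite -phiD !addr0. Qed.

Lemma mod_act0 (G : Type) (mul : G -> G -> G) (one : G) (A : zmodType)
  (act : G -> A -> A) : module_axioms mul one act -> forall g, act g 0 = 0.
Proof. by move=> hA g; exact: additive0 (mod_actD hA g). Qed.

Lemma grp_B2_eq0 (G : Type) (mul : G -> G -> G) (one : G) (A : zmodType)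
  (act : G -> A -> A) (c : G -> G -> A) :
  module_axioms mul one act -> (forall g h, c g h = 0) -> grp_B2 mul act c.
Proof.
by move=> hA c0; exists (fun _ => 0) => g h; rewrite c0 (mod_act0 hA) subr0 addr0.
Qed.

Definition hom_part (P : zmodType) (G : Type) (A : zmodType) (one : G)
  (z : P -> G -> G -> A) (x : P) : A :=
  z x one one - z 0 one one.

Definition split_cochain (P : zmodType) (G : Type) (A : zmodType)
  (c : G -> G -> A) (phi : P -> A) : P -> G -> G -> A :=
  fun m h g => c h g + phi m.

Section TrivialCrossedModule.
Variables (G : Type) (mul : G -> G -> G) (one : G) (inv : G -> G).
Hypothesis hG : group_axioms mul one inv.
Variables (P A : zmodType) (actP : G -> P -> P) (actA : G -> A -> A).
Hypotheses (hP : module_axioms mul one actP) (hA : module_axioms mul one actA).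

Local Notation mu := (fun _ : P => one).
Local Notation xd2E := (xd2 mul (fun x y : P => x + y) actP mu actA).
Local Notation Z2E := (xZ2 mul (fun x y : P => x + y) actP mu actA).
Local Notation B2E := (xB2 mul mu actA).
Local Notation phi_ z := (hom_part one z).

Let mul1g := grp_mul1g hG.

Lemma xd2E_ext (z z' : P -> G -> G -> A) :
  (forall m h g, z m h g = z' m h g) -> forall p n k m h g,
  xd2E z p n k m h g = xd2E z' p n k m h g.
Proof. by move=> zz' p n k m h g; rewrite /xd2 !zz'. Qed.

Lemma xd2E_split (c : G -> G -> A) (phi : P -> A) p n k m h g :
  xd2E (split_cochain c phi) p n k m h g =
  (c k h - c k (mul h g) + c (mul k h) g - actA k (c h g))
  + (phi p - phi (p + n) + phi (n + actP k m) - actA k (phi m)).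
Proof. by rewrite /xd2 /split_cochain /= !mul1g (mod_actD hA) addrB4ACA. Qed.

Lemma grp_Z2_opp (c : G -> G -> A) :
  (forall k h g,
     c k h - c k (mul h g) + c (mul k h) g - actA k (c h g) = 0) <->
  grp_Z2 mul actA c.
Proof. by split=> Hc k h g; rewrite opprB4 Hc oppr0. Qed.

Lemma split_cochain_xZ2 (c : G -> G -> A) (phi : P -> A) :
  grp_Z2 mul actA c -> is_equiv_hom actP actA phi ->
  Z2E (split_cochain c phi).
Proof.
move=> /grp_Z2_opp Hc [phiD phiJ] p n k m h g.
rewrite xd2E_split Hc add0r !phiD phiJ.
by rewrite addrA addrK opprD addrA subrr add0r addNr.
Qed.

Section Cocycle.
Variable z : P -> G -> G -> A.
Hypothesis Hz : Z2E z.

Lemma xZ2E_solved p n k m h g :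
  z (p + n) k (mul h g) =
  z p k h + z (n + actP k m) (mul k h) g - actA k (z m h g).
Proof.
apply/esym/subr0_eq; have := Hz p n k m h g.
by rewrite /xd2 !mul1g addrB4C.
Qed.

Lemma xZ2E_grp_Z2 : grp_Z2 mul actA (z 0).
Proof.
apply/grp_Z2_opp => k h g; have := Hz 0 0 k 0 h g.
by rewrite /xd2 !mul1g addr0 (mod_act0 hP) addr0.
Qed.

Lemma xZ2E_subr_mulr p k h g :
  z p k (mul h g) - z 0 k (mul h g) = z p k h - z 0 k h.
Proof.
have := xZ2E_solved p 0 k 0 h g; have := xZ2E_solved 0 0 k 0 h g.
by rewrite !(addr0, add0r, mod_act0 hP) => -> ->; rewrite addrBKA.
Qed.

Lemma xZ2E_subr_mull n k h g :
  z n (mul k h) g - z 0 (mul k h) g = z n k (mul h g) - z 0 k (mul h g).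
Proof.
have := xZ2E_solved 0 n k 0 h g; have := xZ2E_solved 0 0 k 0 h g.
by rewrite !(addr0, add0r, mod_act0 hP) => -> ->; rewrite addKrBA.
Qed.

Lemma xZ2E_split m h g : z m h g = split_cochain (z 0) (phi_ z) m h g.
Proof.
have := xZ2E_subr_mull m one h g; have := xZ2E_subr_mulr m one one (mul h g).
by rewrite /split_cochain /hom_part !mul1g => -> <-; rewrite addrC subrK.
Qed.

Lemma xZ2E_hom_part : is_equiv_hom actP actA (phi_ z).
Proof.
have phi_rel n k m : phi_ z (n + actP k m) = phi_ z n + actA k (phi_ z m).
  have := Hz 0 n k m one one.
  rewrite (xd2E_ext xZ2E_split) xd2E_split.
  rewrite (grp_Z2_opp (z 0)).2 ?add0r; last exact: xZ2E_grp_Z2.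
  rewrite {1}/hom_part subrr add0r => /subr0_eq <-.
  by rewrite addrA subrr add0r.
split=> [x y | g x].
  by rewrite -{1}[y](mod_act1 hP) phi_rel (mod_act1 hA).
by rewrite -[actP g x]add0r phi_rel /hom_part subrr add0r.
Qed.

Lemma xB2E_split :
  B2E z <-> (forall x, phi_ z x = 0) /\ grp_B2 mul actA (z 0).
Proof.
have xd1E f m h g : xd1 mul mu actA f m h g
                    = actA h (f g) - f (mul h g) + f h.
  by rewrite /xd1 mul1g addrBDC.
split=> [[f zf] | [phi0 [f cf]]].
  split=> [x | ]; first by rewrite /hom_part !zf !xd1E subrr.
  by exists f => g h; rewrite zf xd1E addrBDC.
exists f => m h g; rewrite xZ2E_split /split_cochain phi0 addr0 cf.
by rewrite xd1E addrBDC.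
Qed.

End Cocycle.
End TrivialCrossedModule.

Theorem mainTheorem16
  (G : Type) (mul : G -> G -> G) (one : G) (inv : G -> G)
  (hG : group_axioms mul one inv)
  (P A : zmodType) (actP : G -> P -> P) (actA : G -> A -> A)
  (hP : module_axioms mul one actP) (hA : module_axioms mul one actA) :
  let Z2E := xZ2 mul (fun x y : P => x + y) actP (fun _ : P => one) actA in
  let B2E := xB2 mul (fun _ : P => one) actA in
  exists F : (P -> G -> G -> A) -> (P -> A) * (G -> G -> A),
    (forall z, Z2E z ->
       is_equiv_hom actP actA (F z).1 /\ grp_Z2 mul actA (F z).2) /\
    (forall z z', Z2E z -> Z2E z' ->
       (forall x, (F (fun m h g => z m h g + z' m h g)).1 x
                  = (F z).1 x + (F z').1 x) /\
       grp_B2 mul actA (fun g h => (F (fun m h g => z m h g + z' m h g)).2 g h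
                  - ((F z).2 g h + (F z').2 g h))) /\
    (forall (phi : P -> A) (c : G -> G -> A),
       is_equiv_hom actP actA phi -> grp_Z2 mul actA c ->
       exists z, Z2E z /\ (forall x, (F z).1 x = phi x) /\
                 grp_B2 mul actA (fun g h => (F z).2 g h - c g h)) /\
    (forall z, Z2E z ->
       ((forall x, (F z).1 x = 0) /\ grp_B2 mul actA (F z).2) <-> B2E z).
Proof.
move=> Z2E B2E; exists (fun z => (hom_part one z, z 0)).
split; first by move=> z hz; exact: (conj (xZ2E_hom_part hG hP hA hz) (xZ2E_grp_Z2 hG hP hz)).
split.
  move=> z z' _ _; split; first by move=> x; rewrite /hom_part /= opprD addrACA.
  by apply: grp_B2_eq0 hA _ => g h; rewrite subrr.
split.
  move=> phi c [phiD phiJ] hc; have phi0 := additive0 phiD.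
  exists (split_cochain c phi); split; first exact: (split_cochain_xZ2 hG hA hc (conj phiD phiJ)).
  split; first by move=> x; rewrite /hom_part /split_cochain /= phi0 addr0 addrAC subrr add0r.
  by apply: grp_B2_eq0 hA _ => g h; rewrite /split_cochain /= phi0 addr0 subrr.
by move=> z hz; exact: (iff_sym (xB2E_split hG hP hz)).
Qed.
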